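(* Let ${\bf m}=(m_1,\dots,m_n)$ and ${\bf a}=(a_1,\dots,a_n)$ be vectors of nonnegative integers with $\|{\bf a}\|<\|{\bf m}\|$ for which at least one $({\bf m},{\bf a})$-permutation exists. For $i\in[n]$, let $f_i({\bf m},{\bf a})$ be the fraction of all $({\bf m},{\bf a})$-permutations whose last term is $i$. Then \[f_i({\bf m},{\bf a})\le\frac{m_i}{\|{\bf m}\|-a_i}.\]
   Context: $\|v\|=\sum_i |v_i|$. An ${\bf m}$-permutation is a word of length $\|{\bf m}\|$ over the alphabet $[n]$ in which each $i$ appears exactly $m_i$ times. An $({\bf m},{\bf a})$-permutation is an ${\bf m}$-permutation $\pi$ such that the first $a_1$ terms are not $1$, the next $a_2$ terms are not $2$, and so on (so positions $a_1+\dots+a_{i-1}+1,\dots,a_1+\dots+a_i$ are forbidden from taking the value $i$). *)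

From mathcomp Require Import all_boot all_order all_algebra.
Unset Printing Implicit Defensive.

Definition msum {n : nat} (v : 'I_n -> nat) : nat := \sum_(i < n) v i.

(* a_1 + ... + a_{i-1} (0-indexed: sum over j < i) *)
Definition psum {n : nat} (a : 'I_n -> nat) (i : 'I_n) : nat :=
  \sum_(j < n | j < i) a j.

(* A word of length ||m|| over the alphabet 'I_n (= [n]) is an
   (m,a)-permutation: each letter i occurs exactly m i times, and the
   (0-indexed) positions psum a i, ..., psum a i + a i - 1 do not carry i. *)
Definition is_ma_perm {n : nat} (m a : 'I_n -> nat)
    (w : (msum m).-tuple 'I_n) : bool :=
  [forall i : 'I_n, count_mem i w == m i] &&
  [forall p : 'I_(msum m), forall i : 'I_n,
      ((psum a i <= p) && (p < psum a i + a i)) ==> (tnth w p != i)].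

Definition ma_perms {n : nat} (m a : 'I_n -> nat) : {set (msum m).-tuple 'I_n} :=
  [set w | is_ma_perm m a w].

Definition last_is {n T : nat} (w : T.-tuple 'I_n) (i : 'I_n) : bool :=
  ohead (rev w) == Some i.

From mathcomp Require Import all_boot all_order all_algebra.
From mathcomp Require Import perm zify.
Import Order.TTheory GRing.Theory Num.Theory.

(* Let S_i be the set of (m,a)-permutations ending in i. Since ||a|| < ||m||,
   the last position is forbidden for no letter, so swapping the last letter i
   of w in S_i with a letter j <> i standing at a position p outside the block
   of i yields an (m,a)-permutation ending in j with i at position p. The map
   (w, p) |-> (swapped w, p) is injective; each w in S_i offers at least
   ||m|| - a_i - m_i such positions p, and each permutation outside S_i has
   exactly m_i positions carrying i. Hence
   |S_i| (||m|| - a_i - m_i) <= (|S| - |S_i|) m_i, i.e.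
   |S_i| (||m|| - a_i) <= |S| m_i. *)

Lemma count_tnth (T : eqType) N (w : N.-tuple T) (P : pred T) :
  count P w = #|[pred p : 'I_N | P (tnth w p)]|.
Proof. by rewrite -{1}(map_tnth_enum w) count_map enumT cardE /enum_mem size_filter. Qed.

Lemma card_ord_interval N lo l : #|[pred p : 'I_N | lo <= p < lo + l]| <= l.
Proof.
rewrite cardE -(size_map val) -[X in _ <= X](size_iota lo).
apply: uniq_leq_size => [|x /mapP[p]]; first by rewrite (map_inj_uniq val_inj) enum_uniq.
by rewrite mem_enum inE mem_iota => /andP[lo_p p_lt] ->; rewrite lo_p.
Qed.

Lemma card_dep_pairs {T1 T2 : finType} (P : {pred T1}) (Q : T1 -> pred T2) :
  #|[set x : T1 * T2 | (x.1 \in P) && Q x.1 x.2]| = \sum_(t in P) #|[pred y | Q t y]|.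
Proof.
rewrite -sum1_card (eq_bigl (fun x => (x.1 \in P) && Q x.1 x.2)) => [|x]; last by rewrite inE.
by rewrite -(pair_big_dep _ Q (fun _ _ => 1)); apply: eq_bigr => t _; rewrite -sum1_card.
Qed.

Section AvoidingWords.
Variables (T : finType) (N : nat) (m : T -> nat) (forbid : 'I_N -> T -> bool).

Definition avoiding_word (w : N.-tuple T) : bool :=
  [forall k, count_mem k w == m k] &&
  [forall p, forall k, forbid p k ==> (tnth w p != k)].

Definition avoiding_words : {set N.-tuple T} := [set w | avoiding_word w].

Definition tswap (w : N.-tuple T) (p q : 'I_N) : N.-tuple T :=
  [tuple tnth w (tperm p q k) | k < N].

Lemma tswapK w p q : tswap (tswap w p q) p q = w.
Proof. by apply: eq_from_tnth => k; rewrite !tnth_mktuple tpermK. Qed.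

Lemma count_tswap w p q (P : pred T) : count P (tswap w p q) = count P w.
Proof.
rewrite !count_tnth -[RHS]cardsE -(card_preimset _ (@perm_inj _ (tperm p q))).
by apply: eq_card => k; rewrite !inE tnth_mktuple.
Qed.

Lemma avoiding_tswap w p q :
    w \in avoiding_words -> ~~ forbid p (tnth w q) -> ~~ forbid q (tnth w p) ->
  tswap w p q \in avoiding_words.
Proof.
rewrite !inE => /andP[/forallP w_count /forallP w_avoid] p_ok q_ok.
apply/andP; split; first by apply/forallP => k; rewrite count_tswap w_count.
apply/forallP => r; apply/forallP => k; rewrite tnth_mktuple.
case: tpermP => [->|->|_ _]; apply/implyP => forbid_rk.
- by apply: contraNneq p_ok => ->.
- by apply: contraNneq q_ok => ->.
- exact: implyP (forallP (w_avoid r) k) forbid_rk.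
Qed.

Lemma card_tnth_avoiding w i :
  w \in avoiding_words -> #|[pred p | tnth w p == i]| = m i.
Proof. by rewrite inE => /andP[/forallP w_count _]; rewrite -(eqP (w_count i)) count_tnth. Qed.

Lemma leq_card_tnth_neq w (A : pred 'I_N) i : w \in avoiding_words ->
  #|A| - m i <= #|[pred p | A p && (tnth w p != i)]|.
Proof.
move=> /card_tnth_avoiding <-; rewrite leq_subLR -(cardID [pred p | tnth w p == i] A).
by apply: leq_add; apply/subset_leq_card/subsetP => p; rewrite !inE andbC // => /andP[].
Qed.

Section LastLetter.
Variables (lp : 'I_N) (i : T).
Hypothesis lp_free : forall k, ~~ forbid lp k.

Let S := avoiding_words.
Let Si := [set w in S | tnth w lp == i].

Lemma card_avoiding_last : #|Si| * #|[pred p | ~~ forbid p i]| <= #|S| * m i.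
Proof.
pose A := [pred p | ~~ forbid p i].
pose L := [set x : N.-tuple T * 'I_N | (x.1 \in Si) && (A x.2 && (tnth x.1 x.2 != i))].
pose R := [set x : N.-tuple T * 'I_N | (x.1 \in S :\: Si) && (tnth x.1 x.2 == i)].
have SiS : Si \subset S by apply/subsetP => w; rewrite inE => /andP[].
have L_le_R : #|L| <= #|R|.
  pose f x := (tswap x.1 x.2 lp, x.2).
  have f_inj : injective f.
    move=> [w p] [w' p'] fE.
    move: (congr1 fst fE) (congr1 snd fE) => /= w_w' p_p'; subst p'.
    by rewrite -(tswapK w p lp) w_w' tswapK.
  rewrite -(card_imset L f_inj); apply/subset_leq_card/subsetP => _ /imsetP[[w p] + ->].
  rewrite !inE /= => /andP[/andP[wS /eqP w_lp] /andP[p_ok w_p]].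
  have: tswap w p lp \in S by apply: avoiding_tswap; rewrite ?inE ?w_lp ?lp_free.
  by rewrite !inE => -> /=; rewrite !tnth_mktuple tpermR tpermL w_lp eqxx w_p.
have low_L : #|Si| * (#|A| - m i) <= #|L|.
  rewrite (card_dep_pairs Si (fun w p => A p && (tnth w p != i))) -sum_nat_const.
  apply: leq_sum => w w_Si.
  exact/leq_card_tnth_neq/(subsetP SiS).
have eq_R : #|R| = #|S :\: Si| * m i.
  rewrite (card_dep_pairs (S :\: Si) (fun w p => tnth w p == i)) -sum_nat_const.
  by apply: eq_bigr => w /setDP[/card_tnth_avoiding <- _].
have := cardsID Si S; rewrite (setIidPr SiS) => card_S.
rewrite -/A; nia.
Qed.

End LastLetter.
End AvoidingWords.
Arguments avoiding_words {T N}.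
Arguments card_avoiding_last {T N} m {forbid lp} i.

Lemma last_is_tnth {n N} (w : N.-tuple 'I_n) i {lp : 'I_N} :
  lp.+1 = N -> last_is w i = (tnth w lp == i).
Proof.
move=> lp_last; rewrite /last_is (tnth_nth i).
have : nth i (rev w) 0 = nth i w lp.
  rewrite nth_rev size_tuple; last by rewrite -lp_last.
  by congr nth; rewrite -[X in X - _]lp_last subSS subn0.
case rev_w: (rev w) => [|x r] /= <- //.
by move: (congr1 size rev_w); rewrite size_rev size_tuple -lp_last.
Qed.

Definition in_block {n N} (a : 'I_n -> nat) (p : 'I_N) (k : 'I_n) : bool :=
  psum a k <= p < psum a k + a k.

Lemma ma_permsE n (m a : 'I_n -> nat) :
  ma_perms m a = avoiding_words m (@in_block n (msum m) a).
Proof. by []. Qed.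

Lemma psum_block_le {n} (a : 'I_n -> nat) k : psum a k + a k <= msum a.
Proof.
rewrite /msum /psum [X in _ <= X](bigID (fun j : 'I_n => j < k)) /= leq_add2l.
by rewrite [X in _ <= X](bigD1 k) ?ltnn //= leq_addr.
Qed.

Lemma card_out_block {n} N (a : 'I_n -> nat) k :
  N - a k <= #|[pred p : 'I_N | ~~ in_block a p k]|.
Proof.
rewrite leq_subLR -[X in X <= _](card_ord N) -(cardC [pred p : 'I_N | in_block a p k]).
exact/leq_add/leqnn/card_ord_interval.
Qed.

Local Open Scope ring_scope.

Theorem lemma3p5 (n : nat) (m a : 'I_n -> nat) (i : 'I_n) :
  (msum a < msum m)%N ->
  (0 < #|ma_perms m a|)%N ->
  (#|[set w in ma_perms m a | last_is w i]|%:R / #|ma_perms m a|%:R : rat)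
    <= (m i)%:R / (msum m - a i)%N%:R.
Proof.
move=> ma_lt S_gt0.
have ai_lt : (a i < msum m)%N :=
  leq_ltn_trans (leq_trans (leq_addl _ _) (psum_block_le a i)) ma_lt.
have [lp lp_last] : exists lp : 'I_(msum m), lp.+1 = msum m.
  have m_gt0 : (0 < msum m)%N := leq_ltn_trans (leq0n _) ai_lt.
  have lp_lt : ((msum m).-1 < msum m)%N by rewrite ltn_predL.
  by exists (Ordinal lp_lt); rewrite /= prednK.
have lp_free k : ~~ in_block a lp k.
  rewrite /in_block negb_and -leqNgt orbC -ltnS lp_last.
  by rewrite (leq_ltn_trans (psum_block_le a k) ma_lt).
have -> : [set w in ma_perms m a | last_is w i] =
          [set w in ma_perms m a | tnth w lp == i].
  by apply/setP => w; rewrite !inE (last_is_tnth w i lp_last).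
have := card_avoiding_last m i lp_free; rewrite -ma_permsE.
move/(leq_trans (leq_mul (leqnn _) (card_out_block _ a i))) => card_last_le.
rewrite ler_pdivlMr ?ltr0n ?subn_gt0 // mulrAC ler_pdivrMr ?ltr0n //.
by rewrite -!natrM ler_nat (mulnC (m i)).
Qed.
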